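(* Let $f:\mathbb{R}^n\to\mathbb{R}$ be bounded, $\lambda>0$, $h>0$. On the grid $h\mathbb{Z}^n$ define $f_0(x_k)=f(x_k)$ and, for $i\ge1$, $$f_i(x_k)=\min\{f_{i-1}(x_k+rh)+\lambda h^2|r|^2\tau_i:\ r\in\mathbb{Z}^n,\ |r|_\infty\le1\},\qquad \tau_i=2i-1.$$ Then for every grid point $x_k\in h\mathbb{Z}^n$ and every $m=0,1,2,\dots$, $$f_m(x_k)=g_m(x_k):=\inf\{f(x_k+rh)+\lambda h^2|r|^2:\ r\in\mathbb{Z}^n,\ |r|_\infty\le m\}.$$
   Context: $|r|$ is the Euclidean norm and $|r|_\infty=\max_i|r_i|$ the maximum norm of $r\in\mathbb{Z}^n$. *)

From HB Require Import structures.
From mathcomp Require Import all_boot all_order all_algebra.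
From mathcomp Require Import classical_sets reals.
Set Implicit Arguments. Unset Strict Implicit. Unset Printing Implicit Defensive.
Import Order.TTheory GRing.Theory Num.Theory.
Local Open Scope ring_scope.
Local Open Scope classical_set_scope.

Definition sqnorm (n : nat) (r : 'rV[int]_n) : int := \sum_(i < n) (r 0 i) ^+ 2.

Definition box (n : nat) (m : nat) : set 'rV[int]_n :=
  [set r | forall i : 'I_n, `|r 0 i| <= m%:Z].

Arguments box : clear implicits.

Definition gridpt (R : realType) (n : nat) (h : R) (k : 'rV[int]_n) : 'rV[R]_n :=
  h *: map_mx (fun z : int => z%:~R) k.

(* f_i(x_k), indexed by k in Z^n (x_k = h k, x_k + r h = h (k + r)),
   with tau_i = 2 i - 1 *)
Fixpoint fiter (R : realType) (n : nat) (f : 'rV[R]_n -> R) (lam h : R)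
    (i : nat) (k : 'rV[int]_n) : R :=
  match i with
  | 0 => f (gridpt h k)
  | i'.+1 =>
      inf [set fiter f lam h i' (k + r) + lam * h ^+ 2 * (sqnorm r)%:~R
                 * (2 * i'.+1 - 1)%N%:R | r in box n 1%N]
  end.

Definition gfun (R : realType) (n : nat) (f : 'rV[R]_n -> R) (lam h : R)
    (m : nat) (k : 'rV[int]_n) : R :=
  inf [set f (gridpt h (k + r)) + lam * h ^+ 2 * (sqnorm r)%:~R | r in box n m].

From HB Require Import structures.
From mathcomp Require Import all_boot all_order all_algebra.
From mathcomp Require Import classical_sets reals.
From mathcomp Require Import zify ring.
Set Implicit Arguments. Unset Strict Implicit. Unset Printing Implicit Defensive.
Import Order.TTheory GRing.Theory Num.Theory.
Local Open Scope ring_scope.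
Local Open Scope classical_set_scope.

(* The minima [g_m] obey the dynamic-programming recursion
   [g_(m+1)(k) = min_(|s|_oo <= 1) g_m(k + s) + lam h^2 tau_(m+1) |s|^2],
   which is exactly the recursion defining [f_(m+1)]; induction on [m] then
   concludes.  The recursion is coordinatewise integer arithmetic: every
   [t] with [|t|_oo <= m+1] splits as [t = s + r] with [|s|_oo <= 1],
   [|r|_oo <= m] and [|t|^2 = |r|^2 + tau_(m+1) |s|^2] (take [s_i = sign t_i]
   exactly when [|t_i| = m+1]), while every such splitting satisfies
   [|s + r|^2 <= |r|^2 + tau_(m+1) |s|^2], because [2 s_i r_i <= 2 m s_i^2]. *)

Definition tau (i : nat) : nat := (2 * i - 1)%N.

Lemma tauS (m : nat) : (tau m.+1)%:R = 2 * m%:Z + 1.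
Proof. by rewrite /tau natrB // natrM; lia. Qed.

Lemma sqr_addz_le (m : nat) (s r : int) : `|s| <= 1 -> `|r| <= m%:Z ->
  (s + r) ^+ 2 <= r ^+ 2 + s ^+ 2 * (tau m.+1)%:R.
Proof.
rewrite tauS !ler_norml => /andP[s_ge s_le] /andP[r_ge r_le].
have : s = -1 \/ s = 0 \/ s = 1 by lia.
by case=> [->|[->|->]]; rewrite !expr2; nia.
Qed.

Definition box_step (m : nat) (t : int) : int :=
  if m%:Z < t then 1 else if t < - m%:Z then -1 else 0.

Lemma box_step_norm (m : nat) (t : int) : `|box_step m t| <= 1.
Proof. by rewrite /box_step; case: ifP => _; last case: ifP => _. Qed.

Lemma box_step_sub (m : nat) (t : int) : `|t| <= m.+1%:Z ->
  `|t - box_step m t| <= m%:Z.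
Proof.
rewrite /box_step !ler_norml => /andP[t_ge t_le].
by case: ifP => ?; last case: ifP => ?; lia.
Qed.

Lemma sqr_box_step (m : nat) (t : int) : `|t| <= m.+1%:Z ->
  (t - box_step m t) ^+ 2 + (box_step m t) ^+ 2 * (tau m.+1)%:R = t ^+ 2.
Proof.
rewrite tauS /box_step ler_norml => /andP[t_ge t_le].
by case: ifP => ?; last case: ifP => ?; rewrite !expr2; nia.
Qed.

Lemma sqnorm_ge0 (n : nat) (r : 'rV[int]_n) : 0 <= sqnorm r.
Proof. by apply: sumr_ge0 => i _; rewrite sqr_ge0. Qed.

Lemma sqnorm0 (n : nat) : sqnorm (0 : 'rV[int]_n) = 0.
Proof. by rewrite /sqnorm big1 // => i _; rewrite mxE expr0n. Qed.

Lemma box0 (n m : nat) : box n m 0.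
Proof. by move=> i; rewrite mxE normr0. Qed.

Lemma box_0_eq0 (n : nat) (r : 'rV[int]_n) : box n 0 r -> r = 0.
Proof.
move=> r0; apply/matrixP => i j; rewrite (ord1 i) mxE; apply/eqP.
by rewrite -normr_le0; apply: r0.
Qed.

Lemma boxD (n m : nat) (s r : 'rV[int]_n) : box n 1 s -> box n m r ->
  box n m.+1 (s + r).
Proof.
move=> s1 rm i; rewrite mxE; move: (s1 i) (rm i).
by move: (s 0 i) (r 0 i) => a b; rewrite !ler_norml; lia.
Qed.

Lemma sqnorm_addr_le (n m : nat) (s r : 'rV[int]_n) : box n 1 s -> box n m r ->
  sqnorm (s + r) <= sqnorm r + sqnorm s * (tau m.+1)%:R.
Proof.
move=> s1 rm; rewrite /sqnorm mulr_suml -big_split /=.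
by apply: ler_sum => i _; rewrite mxE; apply: sqr_addz_le.
Qed.

Lemma sqnorm_box_split (n m : nat) (t : 'rV[int]_n) : box n m.+1 t ->
  exists2 s, box n 1 s &
    box n m (t - s) /\ sqnorm (t - s) + sqnorm s * (tau m.+1)%:R = sqnorm t.
Proof.
move=> tm; exists (\row_i box_step m (t 0 i)).
  by move=> i; rewrite mxE box_step_norm.
split; first by move=> i; rewrite !mxE box_step_sub.
rewrite /sqnorm mulr_suml -big_split /=.
by apply: eq_bigr => i _; rewrite !mxE sqr_box_step.
Qed.

Section MinimaRecursion.

Variables (R : realType) (n : nat) (f : 'rV[R]_n -> R) (lam h M : R).
Hypotheses (f_ge : forall x, M <= f x) (lam_ge0 : 0 <= lam).

Let weight_ge0 : 0 <= lam * h ^+ 2.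
Proof. by rewrite mulr_ge0 ?sqr_ge0. Qed.

Let gset (m : nat) (k : 'rV[int]_n) :=
  [set f (gridpt h (k + r)) + lam * h ^+ 2 * (sqnorm r)%:~R | r in box n m].

Let gset_ne (m : nat) (k : 'rV[int]_n) : gset m k !=set0.
Proof. by eexists; exists 0; first exact: box0. Qed.

Let gset_lbound (m : nat) (k : 'rV[int]_n) : lbound (gset m k) M.
Proof.
move=> _ [r _ <-]; rewrite -[M]addr0 lerD //.
by rewrite mulr_ge0 // ler0z sqnorm_ge0.
Qed.

Lemma gfun_le (m : nat) (k r : 'rV[int]_n) : box n m r ->
  gfun f lam h m k <= f (gridpt h (k + r)) + lam * h ^+ 2 * (sqnorm r)%:~R.
Proof. by move=> rm; apply: ge_inf; [exists M; apply: gset_lbound | exists r]. Qed.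

Lemma gfun_ge (m : nat) (k : 'rV[int]_n) : M <= gfun f lam h m k.
Proof. exact: lb_le_inf (@gset_ne m k) (@gset_lbound m k). Qed.

Lemma gfun0 (k : 'rV[int]_n) : gfun f lam h 0 k = f (gridpt h k).
Proof.
apply/le_anti/andP; split.
  by have := @gfun_le 0 k 0 (@box0 n 0); rewrite sqnorm0 addr0 mulr0 addr0.
apply: lb_le_inf (@gset_ne 0 k) _ => _ [r /box_0_eq0 -> <-].
by rewrite sqnorm0 addr0 mulr0 addr0.
Qed.

Lemma gfunS (m : nat) (k : 'rV[int]_n) : gfun f lam h m.+1 k =
  inf [set gfun f lam h m (k + s) + lam * h ^+ 2 * (sqnorm s)%:~R * (tau m.+1)%:R
      | s in box n 1].
Proof.
set F := [set _ | s in _].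
have F_lbound : lbound F M.
  move=> _ [s _ <-]; rewrite -[M]addr0 lerD ?gfun_ge //.
  by rewrite mulr_ge0 ?ler0n // mulr_ge0 // ler0z sqnorm_ge0.
have F_ne : F !=set0 by eexists; exists 0; first exact: box0.
have weight_split (r s : 'rV[int]_n) :
    lam * h ^+ 2 * (sqnorm r)%:~R + lam * h ^+ 2 * (sqnorm s)%:~R * (tau m.+1)%:R
    = lam * h ^+ 2 * (sqnorm r + sqnorm s * (tau m.+1)%:R)%:~R.
  by rewrite intrD intrM rmorph_nat; ring.
apply/le_anti/andP; split.
- apply: lb_le_inf F_ne _ => _ [s s1 <-].
  rewrite -lerBlDr; apply: lb_le_inf (@gset_ne m (k + s)) _ => _ [r rm <-].
  rewrite lerBlDr -addrA weight_split -addrA.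
  apply: le_trans (gfun_le _ (boxD s1 rm)) _.
  by rewrite lerD2l ler_wpM2l // ler_int sqnorm_addr_le.
- apply: lb_le_inf (@gset_ne m.+1 k) _ => _ [t tm <-].
  have [s s1 [rm split_eq]] := sqnorm_box_split tm.
  apply: le_trans (ge_inf (ex_intro _ M F_lbound) _) _; first by exists s.
  rewrite /= -split_eq -weight_split addrA lerD2r.
  have -> : k + t = k + s + (t - s) by rewrite -addrA [s + _]addrC subrK.
  exact: gfun_le.
Qed.

End MinimaRecursion.

Theorem theorem4p7 (R : realType) (n : nat) (f : 'rV[R]_n -> R)
    (lam h : R) :
  (exists M : R, forall x, `|f x| <= M) -> 0 < lam -> 0 < h ->
  forall (k : 'rV[int]_n) (m : nat), fiter f lam h m k = gfun f lam h m k.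
Proof.
move=> [M f_bounded] /ltW lam_ge0 _ k m.
have f_ge x : - M <= f x by have := f_bounded x; rewrite ler_norml => /andP[].
elim: m k => [|m IH] k; first by rewrite (gfun0 h f_ge lam_ge0).
rewrite (gfunS h f_ge lam_ge0) /=; congr inf.
by apply: eq_imagel => s _; rewrite IH.
Qed.
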